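(* If the filtered vector space $(V,\ell)$ satisfies the best approximation property, then every subspace $W\le V$ has an $\ell$-orthogonal complement, i.e. a subspace $X\le V$ with $W\oplus X=V$ and $\ell(w+x)=\max\{\ell(w),\ell(x)\}$ for all $w\in W$, $x\in X$.
   Context: A filtered vector space over a field $\kappa$ is a pair $(V,\ell)$ with $V$ a $\kappa$-vector space and $\ell\colon V\to\mathbb{R}\cup\{-\infty\}$ such that $\ell(v)=-\infty$ iff $v=0$, $\ell(cv)=\ell(v)$ for $c\in\kappa\setminus\{0\}$, and $\ell(v+w)\le\max\{\ell(v),\ell(w)\}$. $(V,\ell)$ satisfies the best approximation property if for every proper subspace $W\subsetneq V$ and every $v\in V\setminus W$ there is $w_0\in W$ with $\ell(v-w_0)\le\ell(v-w)$ for all $w\in W$. *)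

From HB Require Import structures.
From mathcomp Require Import all_boot all_order all_algebra.
From mathcomp Require Import boolp reals constructive_ereal.
Set Implicit Arguments. Unset Strict Implicit. Unset Printing Implicit Defensive.
Import Order.TTheory GRing.Theory Num.Theory.
Local Open Scope ring_scope.
Local Open Scope ereal_scope.

Definition subspace (K : fieldType) (V : lmodType K) (W : V -> Prop) : Prop :=
  W 0%R /\ (forall (a : K) (u v : V), W u -> W v -> W (a *: u + v)%R).

Definition filtered (K : fieldType) (V : lmodType K) (R : realType)
    (l : V -> \bar R) : Prop :=
  [/\ (forall v, l v != +oo),
      (forall v, l v = -oo <-> v = 0%R),
      (forall (c : K) (v : V), c != 0%R -> l (c *: v)%R = l v)
    & (forall v w, l (v + w)%R <= maxe (l v) (l w))].

Definition best_approx (K : fieldType) (V : lmodType K) (R : realType)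
    (l : V -> \bar R) : Prop :=
  forall W : V -> Prop, subspace W -> (exists v, ~ W v) ->
  forall v, ~ W v ->
  exists w0, W w0 /\ forall w, W w -> l (v - w0)%R <= l (v - w)%R.

Definition orth_complement (K : fieldType) (V : lmodType K) (R : realType)
    (l : V -> \bar R) (W X : V -> Prop) : Prop :=
  [/\ subspace X,
      (forall v, exists w x, [/\ W w, X x & v = (w + x)%R]),
      (forall v, W v -> X v -> v = 0%R)
    & (forall w x, W w -> X x -> l (w + x)%R = maxe (l w) (l x))].

(** Proof by Zorn's lemma.  Call a subspace X orthogonal to W when every x in X
    is a best approximation of itself from W, i.e. l x <= l (x + w) for w in W;
    for such X one has l (w + x) = max (l w) (l x).  Orthogonality is preserved
    under unions of chains, so there is a maximal orthogonal X.  If W + X were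
    not all of V, the best approximation property would give v' outside W + X
    with l v' <= l (v' + y) for every y in W + X, and X + K v' would be a larger
    orthogonal subspace. *)

From HB Require Import structures.
From mathcomp Require Import all_boot all_order all_algebra.
From mathcomp Require Import boolp reals constructive_ereal classical_sets.
Set Implicit Arguments. Unset Strict Implicit. Unset Printing Implicit Defensive.
Import Order.TTheory GRing.Theory Num.Theory.
Local Open Scope classical_set_scope.
Local Open Scope ereal_scope.

Section Subspaces.
Variables (K : fieldType) (V : lmodType K).
Local Open Scope ring_scope.

Definition lincomb_closed (X : set V) : Prop :=
  forall (a : K) (u v : V), X u -> X v -> X (a *: u + v).

Definition addsp (W X : set V) : set V :=
  fun y => exists w x, [/\ W w, X x & y = w + x].

Definition line (v : V) : set V := fun z => exists c : K, z = c *: v.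

Lemma line0 v : line v 0.
Proof. by exists 0; rewrite scale0r. Qed.

Lemma line_id v : line v v.
Proof. by exists 1; rewrite scale1r. Qed.

Lemma sub_addsp_l (W X : set V) : X 0 -> W `<=` addsp W X.
Proof. by move=> X0 w Ww; exists w, 0; rewrite addr0. Qed.

Lemma sub_addsp_r (W X : set V) : W 0 -> X `<=` addsp W X.
Proof. by move=> W0 x Xx; exists 0, x; rewrite add0r. Qed.

Lemma lincomb_closed0 (X : set V) u : lincomb_closed X -> X u -> X 0.
Proof. by move=> Xc Xu; have := Xc (-1) u u Xu Xu; rewrite scaleN1r addNr. Qed.

Lemma subspaceD (W : set V) u v : subspace W -> W u -> W v -> W (u + v).
Proof. by move=> [_ Wc] Wu Wv; have := Wc 1 u v Wu Wv; rewrite scale1r. Qed.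

Lemma subspaceZ (W : set V) c u : subspace W -> W u -> W (c *: u).
Proof. by move=> [W0 Wc] Wu; have := Wc c u 0 Wu W0; rewrite addr0. Qed.

Lemma subspaceN (W : set V) u : subspace W -> W u -> W (- u).
Proof. by move=> sW Wu; rewrite -scaleN1r; apply: subspaceZ. Qed.

Lemma lincomb_closed_addsp (W X : set V) :
  lincomb_closed W -> lincomb_closed X -> lincomb_closed (addsp W X).
Proof.
move=> Wc Xc a _ _ [w [x [Ww Xx ->]]] [w' [x' [Ww' Xx' ->]]].
exists (a *: w + w'), (a *: x + x'); split; [exact: Wc | exact: Xc |].
by rewrite scalerDr addrACA.
Qed.

Lemma subspace_addsp (W X : set V) : subspace W -> subspace X -> subspace (addsp W X).
Proof.
move=> [W0 Wc] [X0 Xc]; split; last exact: lincomb_closed_addsp.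
by exists 0, 0; rewrite addr0.
Qed.

Lemma lincomb_closed_line v : lincomb_closed (line v).
Proof.
move=> a _ _ [c ->] [c' ->]; exists (a * c + c').
by rewrite scalerDl scalerA.
Qed.

End Subspaces.

Section FilteredSpace.
Variables (K : fieldType) (V : lmodType K) (R : realType) (l : V -> \bar R).
Hypothesis hf : filtered l.

Lemma filteredZ c v : c != 0%R -> l (c *: v)%R = l v.
Proof. by case: hf => _ _ hZ _; apply: hZ. Qed.

Lemma filteredN v : l (- v)%R = l v.
Proof. by rewrite -scaleN1r filteredZ // oppr_eq0 oner_eq0. Qed.

Lemma filteredD v w : l (v + w)%R <= maxe (l v) (l w).
Proof. by case: hf. Qed.

Lemma filtered0 : l 0%R = -oo.
Proof. by case: hf => _ h _ _; apply: (h 0%R).2. Qed.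

Lemma filtered_eqNy v : l v = -oo -> v = 0%R.
Proof. by case: hf => _ h _ _; apply: (h v).1. Qed.

Definition orthogonal (W X : set V) : Prop :=
  forall x w, X x -> W w -> l x <= l (x + w)%R.

Lemma orthogonal_maxe (W X : set V) w x : orthogonal W X ->
  W w -> X x -> l (w + x)%R = maxe (l w) (l x).
Proof.
move=> oWX Ww Xx; apply/eqP; rewrite eq_le filteredD /= ge_max.
rewrite (addrC w) oWX // andbT.
rewrite {1}(_ : w = ((x + w) - x)%R); last by rewrite addrC addKr.
apply: le_trans (filteredD _ _) _.
by rewrite filteredN ge_max lexx oWX.
Qed.

Lemma orthogonal_meet0 (W X : set V) v : subspace W -> orthogonal W X ->
  W v -> X v -> v = 0%R.
Proof.
move=> sW oWX Wv Xv; apply: filtered_eqNy; apply/le_anti; rewrite leNye andbT.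
by rewrite -filtered0 -(subrr v); apply: oWX => //; apply: subspaceN.
Qed.

(* The witness v' is of the form v - u0 with u0 a best approximation of v. *)
Lemma best_approx_residual (S : set V) v : best_approx l -> subspace S -> ~ S v ->
  exists v', ~ S v' /\ forall y, S y -> l v' <= l (v' + y)%R.
Proof.
move=> hb sS nSv.
have [u0 [Su0 u0_best]] := hb S sS (ex_intro _ v nSv) v nSv.
exists (v - u0)%R; split.
  by move=> Sv'; apply: nSv; have := subspaceD sS Sv' Su0; rewrite subrK.
move=> y Sy; have := u0_best (u0 - y)%R (subspaceD sS Su0 (subspaceN sS Sy)).
by rewrite opprB addrA addrAC.
Qed.

Lemma orthogonal_addsp_line (W X : set V) v' : subspace W -> subspace X ->
  orthogonal W X -> (forall y, addsp W X y -> l v' <= l (v' + y)%R) ->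
  orthogonal W (addsp X (line v')).
Proof.
move=> sW sX oWX v'_best _ w [x [_ [Xx [c ->]] ->]] Ww.
have [->|c0] := eqVneq c 0%R; first by rewrite scale0r addr0; exact: oWX.
have l_v' : l v' <= l (x + c *: v' + w)%R.
  rewrite -(filteredZ (x + c *: v' + w)%R (invr_neq0 c0)).
  have -> : (c^-1 *: (x + c *: v' + w) = v' + (c^-1 *: w + c^-1 *: x))%R.
    by rewrite addrAC scalerDr scalerA mulVf // scale1r addrC scalerDr addrC.
  apply: v'_best; exists (c^-1 *: w)%R, (c^-1 *: x)%R.
  by split=> //; [exact: subspaceZ | exact: subspaceZ].
have l_x : l x <= l (x + c *: v' + w)%R.
  apply: le_trans (oWX _ _ Xx Ww) _.
  have -> : (x + w = (x + c *: v' + w) - c *: v')%R by rewrite addrAC addrK.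
  apply: le_trans (filteredD _ _) _.
  by rewrite filteredN filteredZ // ge_max lexx.
apply: le_trans (filteredD _ _) _.
by rewrite filteredZ // ge_max l_v' l_x.
Qed.

(* Zorn's lemma is applied to sets closed under linear combinations rather than
   to subspaces, since the union of the empty chain is empty. *)
Lemma exists_maximal_orthogonal (W : set V) :
  exists A, [/\ subspace A, orthogonal W A &
    forall B, A `<` B -> lincomb_closed B -> ~ orthogonal W B].
Proof.
pose P X := lincomb_closed X /\ orthogonal W X.
have [A [[Ac oWA] Amax]] : exists A, P A /\ forall B, A `<` B -> ~ P B.
  apply: Zorn_bigcup => F FP Ftot; split.
  - move=> a u v [X1 FX1 X1u] [X2 FX2 X2v].
    have [s12|s21] := Ftot _ _ FX1 FX2.
    + by exists X2 => //; apply: (FP _ FX2).1 => //; exact: s12.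
    + by exists X1 => //; apply: (FP _ FX1).1 => //; exact: s21.
  - by move=> x w [X FX Xx] Ww; exact: (FP _ FX).2.
have A0 : A 0%R.
  have [[a Aa]|nA] := pselect (exists a, A a); first exact: lincomb_closed0 Aa.
  exfalso; apply: (Amax [set 0%R]).
    split; first by move=> a Aa; case: nA; exists a.
    by move=> h; apply: nA; exists 0%R; exact: h.
  split; first by move=> a u v /= -> ->; rewrite scaler0 addr0.
  by move=> x w /= -> _; rewrite filtered0 leNye.
by exists A; split=> // B AB Bc oWB; exact: (Amax B).
Qed.

Lemma maximal_orthogonal_addspT (W A : set V) : best_approx l ->
  subspace W -> subspace A -> orthogonal W A ->
  (forall B, A `<` B -> lincomb_closed B -> ~ orthogonal W B) ->
  forall v, addsp W A v.
Proof.
move=> hb sW sA oWA Amax v; apply: contrapT => nv.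
have [v' [nSv' v'_best]] :=
  best_approx_residual hb (subspace_addsp sW sA) nv.
have [W0 _] := sW; have [A0 _] := sA.
apply: (Amax (addsp A (line v'))).
- split; first exact/sub_addsp_l/line0.
  move=> h; apply: nSv'; apply: sub_addsp_r W0 _ _.
  by apply: h; apply: sub_addsp_r A0 _ _; exact: line_id.
- by apply: lincomb_closed_addsp; [case: sA | exact: lincomb_closed_line].
- exact: orthogonal_addsp_line.
Qed.

End FilteredSpace.

Theorem corollary3p9 (K : fieldType) (V : lmodType K) (R : realType)
    (l : V -> \bar R) :
  filtered l -> best_approx l ->
  forall W : V -> Prop, subspace W -> exists X : V -> Prop, orth_complement l W X.
Proof.
move=> hf hb W sW.
have [A [sA oWA Amax]] := exists_maximal_orthogonal hf W.
exists A; split=> //.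
- exact: (maximal_orthogonal_addspT hf hb sW sA oWA Amax).
- by move=> v Wv Av; exact: (orthogonal_meet0 hf sW oWA Wv Av).
- by move=> w x Ww Ax; exact: (orthogonal_maxe hf oWA Ww Ax).
Qed.
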